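(* Let $n>3$ and let $(\mathcal{P},\cdot,\{-,-\})$ be an $n$-dimensional complex Poisson algebra such that $(\mathcal{P},\cdot)$ is filiform. Then $(\mathcal{P},\cdot,\{-,-\})$ is isomorphic to one of the following algebras with basis $e_1,\dots,e_n$, where in each case $e_i\cdot e_j=e_{i+j}$ for $2\le i+j\le n-1$, the listed products are the only further nonzero ones (up to commutativity of $\cdot$ and anticommutativity of $\{-,-\}$): $\mathcal{P}_{1,1}^n$: no further products; $\mathcal{P}_{1,2}^n$: $\{e_1,e_n\}=e_n$; $\mathcal{P}_{1,3}^n$: $\{e_1,e_n\}=e_{n-1}$; $\mathcal{P}_{1,4}^n$: $e_n\cdot e_n=e_{n-1}$; $\mathcal{P}_{1,5}^n$: $e_n\cdot e_n=e_{n-1}$, $\{e_1,e_n\}=e_{n-1}$.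
   Context: A Poisson algebra is a vector space with a commutative associative product $\cdot$ and a Lie bracket $\{-,-\}$ satisfying $\{x\cdot y,z\}=\{x,z\}\cdot y+x\cdot\{y,z\}$. An $n$-dimensional algebra $\mathcal{P}$ is filiform if $\dim\mathcal{P}^i=n-i$ for $2\le i\le n$, where $\mathcal{P}^1=\mathcal{P}$ and $\mathcal{P}^{k+1}=\mathcal{P}^k\cdot\mathcal{P}$. *)

From HB Require Import structures.
From mathcomp Require Import all_boot all_order all_algebra.
From mathcomp Require Import reals complex.
Set Implicit Arguments. Unset Strict Implicit. Unset Printing Implicit Defensive.
Import Order.TTheory GRing.Theory Num.Theory.
Local Open Scope ring_scope.

Definition bilinear_op (K : fieldType) (V : vectType K) (op : V -> V -> V) :=
  (forall (a : K) (x y z : V), op (a *: x + y) z = a *: op x z + op y z) /\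
  (forall (a : K) (x y z : V), op x (a *: y + z) = a *: op x y + op x z).

Definition poisson_algebra (K : fieldType) (V : vectType K)
  (mul br : V -> V -> V) :=
  [/\ bilinear_op mul /\ bilinear_op br,
      (forall x y, mul x y = mul y x) /\
      (forall x y z, mul (mul x y) z = mul x (mul y z)),
      (forall x, br x x = 0),
      (forall x y z, br x (br y z) + br y (br z x) + br z (br x y) = 0)
    & (forall x y z, br (mul x y) z = mul (br x z) y + mul x (br y z))].

Definition prod_space (K : fieldType) (V : vectType K) (mul : V -> V -> V)
  (U W : {vspace V}) : {vspace V} :=
  <<allpairs mul (vbasis U) (vbasis W)>>%VS.

(* Descending series: P^1 = P, P^(k+1) = P^k . P  (lower_pow mul k = P^(k+1)). *)
Fixpoint lower_pow (K : fieldType) (V : vectType K) (mul : V -> V -> V)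
  (k : nat) : {vspace V} :=
  match k with
  | 0 => fullv
  | k'.+1 => prod_space mul (lower_pow mul k') fullv
  end.

Definition algpow (K : fieldType) (V : vectType K) (mul : V -> V -> V)
  (i : nat) : {vspace V} := lower_pow mul i.-1.

Definition filiform (K : fieldType) (V : vectType K) (mul : V -> V -> V) :=
  forall i : nat, (2 <= i <= \dim (fullv : {vspace V}))%N ->
    \dim (algpow mul i) = (\dim (fullv : {vspace V}) - i)%N.

(* 1-based basis vector e_k of 'rV_n (0 if k is out of range). *)
Definition ebas (K : fieldType) (n k : nat) : 'rV[K]_n :=
  \row_(j < n) (if (j.+1 == k)%N then 1 else 0).

(* Bilinear extension of a table on basis vectors (1-based indices). *)
Definition of_table (K : fieldType) (n : nat) (tab : nat -> nat -> 'rV[K]_n)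
  (x y : 'rV[K]_n) : 'rV[K]_n :=
  \sum_(i < n) \sum_(j < n) (x 0 i * y 0 j) *: tab i.+1 j.+1.

Definition fil_mul_tab (K : fieldType) (n : nat) (c : bool) (i j : nat)
  : 'rV[K]_n :=
  (if (i + j <= n.-1)%N then ebas K n (i + j) else 0) +
  (if [&& c, i == n & j == n] then ebas K n n.-1 else 0).

Definition fil_br_tab (K : fieldType) (n : nat) (b : 'rV[K]_n) (i j : nat)
  : 'rV[K]_n :=
  if (i == 1%N) && (j == n) then b
  else if (i == n) && (j == 1%N) then - b else 0.

Definition model_mul (K : fieldType) (n : nat) (c : bool) :=
  of_table (fil_mul_tab K n c).
Definition model_br (K : fieldType) (n : nat) (b : 'rV[K]_n) :=
  of_table (fil_br_tab b).

Definition poisson_iso (K : fieldType) (V W : vectType K)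
  (mulV brV : V -> V -> V) (mulW brW : W -> W -> W) :=
  exists f : V -> W,
    [/\ (forall (a : K) (x y : V), f (a *: x + y) = a *: f x + f y),
        bijective f,
        (forall x y, f (mulV x y) = mulW (f x) (f y))
      & (forall x y, f (brV x y) = brW (f x) (f y))].

From HB Require Import structures.
From mathcomp Require Import all_boot all_order all_algebra.
From mathcomp Require Import reals complex zify ring.
Set Implicit Arguments. Unset Strict Implicit. Unset Printing Implicit Defensive.
Import Order.TTheory GRing.Theory Num.Theory.
Local Open Scope ring_scope.

Import passmx.

(* The filiform condition makes P/P^2 two-dimensional and every P^k/P^(k+1),
   2 <= k < n, one-dimensional.  A dimension count gives a not in P^2 with
   a P in P^3; for any x outside <a> + P^2, the powers x, ..., x^(n-1) span P
   modulo <a>, and a can be corrected inside a + P^2 to some y with x y = 0.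
   Then y^2 = b x^(n-1), and the Leibniz rule turns x y = 0 into
   {x, y} = be y + e x^(n-1) with b be = 0; since {x^k, -} is determined by
   {x, -}, the triple (b, be, e) fixes the whole Poisson structure in the basis
   x, ..., x^(n-1), y.  Rescaling x and y with square and (n-3)-rd roots
   normalises the triple to one of the five models. *)

Section VspaceComplements.
Variables (K : fieldType) (V : vectType K).
Implicit Types (U W : {vspace V}) (u v w : V).

Lemma exists_notin_of_dim_lt U W : (\dim U < \dim W)%N ->
  exists2 v, v \in W & v \notin U.
Proof. by move=> ltUW; apply/subvPn; apply: contraTN ltUW => /dimvS; rewrite leqNgt. Qed.

Lemma dim_add_line v U : v \notin U -> \dim (<[v]> + U) = (\dim U).+1.
Proof.
move=> vU; rewrite dimv_disjoint_sum.
  have v0 : v != 0 by apply: contraNneq vU => ->; apply: mem0v.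
  by rewrite dim_vline v0.
apply/eqP; rewrite -subv0; apply/subvP => z /memv_capP [/vlineP [c ->] zU].
rewrite memv0; have [->|c0] := eqVneq c 0; first by rewrite scale0r.
have : c^-1 *: (c *: v) \in U by apply: memvZ.
by rewrite scalerA mulVf // scale1r (negbTE vU).
Qed.

Lemma add_line_codim1 U W v : (U <= W)%VS -> v \in W -> v \notin U ->
  \dim W = (\dim U).+1 -> (<[v]> + U)%VS = W.
Proof.
move=> UW vW vU dimW; apply/eqP.
by rewrite eqEdim dim_add_line // dimW leqnn andbT subv_add UW andbT -memvE.
Qed.

Lemma memv_add_lineP v U m :
  reflect (exists c, m - c *: v \in U) (m \in <[v]> + U)%VS.
Proof.
apply: (iffP memv_addP) => [[_ /vlineP[c ->] [r rU ->]]|[c mcU]].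
  by exists c; rewrite addrC addKr.
exists (c *: v); first exact/memvZ/memv_line.
by exists (m - c *: v); rewrite // addrC subrK.
Qed.

Lemma span_ind (X : seq V) (P : V -> Prop) :
  P 0 -> (forall u v, P u -> P v -> P (u + v)) -> (forall a u, P u -> P (a *: u)) ->
  (forall x, x \in X -> P x) -> forall v, v \in <<X>>%VS -> P v.
Proof.
move=> P0 PD PZ PX v Xv; rewrite (@coord_span _ _ _ (in_tuple X) v Xv).
by apply: big_ind => // i _; apply/PZ/PX/mem_nth.
Qed.

End VspaceComplements.

Section Bilinear.
Variables (K : fieldType) (V : vectType K) (op : V -> V -> V).
Hypothesis op_bilinear : bilinear_op op.
Implicit Types (U W : {vspace V}) (u v w : V).

Let opDZl := proj1 op_bilinear.
Let opDZr := proj2 op_bilinear.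

Lemma op0l w : op 0 w = 0.
Proof. by have := opDZl (-1) 0 0 w; rewrite scaler0 addr0 scaleN1r addNr. Qed.
Lemma op0r w : op w 0 = 0.
Proof. by have := opDZr (-1) w 0 0; rewrite scaler0 addr0 scaleN1r addNr. Qed.
Lemma opDl u v w : op (u + v) w = op u w + op v w.
Proof. by have := opDZl 1 u v w; rewrite !scale1r. Qed.
Lemma opDr u v w : op w (u + v) = op w u + op w v.
Proof. by have := opDZr 1 w u v; rewrite !scale1r. Qed.
Lemma opZl a u w : op (a *: u) w = a *: op u w.
Proof. by have := opDZl a u 0 w; rewrite !addr0 op0l addr0. Qed.
Lemma opZr a u w : op w (a *: u) = a *: op w u.
Proof. by have := opDZr a w u 0; rewrite !addr0 op0r addr0. Qed.
Lemma opNl u w : op (- u) w = - op u w.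
Proof. by rewrite -scaleN1r opZl scaleN1r. Qed.
Lemma opNr u w : op w (- u) = - op w u.
Proof. by rewrite -scaleN1r opZr scaleN1r. Qed.
Lemma opBl u v w : op (u - v) w = op u w - op v w.
Proof. by rewrite opDl opNl. Qed.
Lemma opBr u v w : op w (u - v) = op w u - op w v.
Proof. by rewrite opDr opNr. Qed.

Lemma op_suml I r (P : pred I) (F : I -> V) w :
  op (\sum_(i <- r | P i) F i) w = \sum_(i <- r | P i) op (F i) w.
Proof. exact: (big_morph (op^~ w) (fun u v => opDl u v w) (op0l w)). Qed.
Lemma op_sumr I r (P : pred I) (F : I -> V) w :
  op w (\sum_(i <- r | P i) F i) = \sum_(i <- r | P i) op w (F i).
Proof. exact: (big_morph (op w) (fun u v => opDr u v w) (op0r w)). Qed.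

Lemma op_anti (op_alt : forall x, op x x = 0) u v : op v u = - op u v.
Proof.
apply/eqP; rewrite -addr_eq0 addrC.
by have := op_alt (u + v); rewrite opDl !opDr !op_alt add0r addr0 => ->.
Qed.

Lemma prod_space_mem U W u w : u \in U -> w \in W -> op u w \in prod_space op U W.
Proof.
move=> uU wW; rewrite (coord_vbasis uU) (coord_vbasis wW) op_suml.
apply: memv_suml => i _; rewrite opZl op_sumr; apply: memvZ.
apply: memv_suml => j _; rewrite opZr; apply/memvZ/memv_span/allpairs_f.
  by rewrite mem_nth ?size_tuple.
by rewrite mem_nth ?size_tuple.
Qed.

Lemma prod_space_sub U W (Z : {vspace V}) :
  (forall u w, u \in U -> w \in W -> op u w \in Z) ->
  (prod_space op U W <= Z)%VS.
Proof.
move=> UWZ; apply/span_subvP => _ /allpairsP[[u w] /= [uU wW ->]].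
by apply: UWZ; apply: vbasis_mem.
Qed.

Lemma prod_space_ind U W (P : V -> Prop) :
  P 0 -> (forall u v, P u -> P v -> P (u + v)) -> (forall a u, P u -> P (a *: u)) ->
  (forall u w, u \in U -> w \in W -> P (op u w)) ->
  forall v, v \in prod_space op U W -> P v.
Proof.
move=> P0 PD PZ PUW; apply: span_ind => // _ /allpairsP[[u w] /= [uU wW ->]].
by apply: PUW; apply: vbasis_mem.
Qed.

Local Notation n := (\dim {:V}).

Lemma rVof_op_table (e : n.-tuple V) (tab : nat -> nat -> 'rV[K]_n) :
  basis_of fullv e ->
  (forall i j : 'I_n, op e`_i e`_j = vecof e (tab i.+1 j.+1)) ->
  forall u w, rVof e (op u w) = of_table tab (rVof e u) (rVof e w).
Proof.
move=> eB e_tab u w; rewrite -{1}(rVofK eB u) -{1}(rVofK eB w) /vecof op_suml.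
rewrite linear_sum; apply: eq_bigr => i _; rewrite opZl op_sumr scaler_sumr.
rewrite !linear_sum; apply: eq_bigr => j _.
by rewrite opZr e_tab scalerA !linearZ /= vecofK.
Qed.

End Bilinear.

Lemma ebas_delta (K : fieldType) n (i : 'I_n) : ebas K n i.+1 = delta_mx 0 i.
Proof. by apply/rowP => j; rewrite !mxE eqSS val_eqE eqxx; case: eqP. Qed.

Lemma vecof_ebas (K : fieldType) (V : vectType K) (e : (\dim {:V}).-tuple V) k :
  (0 < k <= \dim {:V})%N -> vecof e (ebas K _ k) = e`_k.-1.
Proof. by case: k => // k /= k_lt; rewrite (ebas_delta K (Ordinal k_lt)) vecof_delta. Qed.

Lemma poisson_iso_of_basis (K : fieldType) (V : vectType K) (mul br : V -> V -> V)
    (e : (\dim {:V}).-tuple V) (tm tb : nat -> nat -> 'rV[K]_(\dim {:V})) :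
  bilinear_op mul -> bilinear_op br -> basis_of fullv e ->
  (forall i j : 'I_(\dim {:V}), mul e`_i e`_j = vecof e (tm i.+1 j.+1)) ->
  (forall i j : 'I_(\dim {:V}), br e`_i e`_j = vecof e (tb i.+1 j.+1)) ->
  poisson_iso mul br (of_table tm) (of_table tb).
Proof.
move=> mulB brB eB e_tm e_tb; exists (rVof e); split.
- by move=> a u w; rewrite linearP.
- by exists (vecof e); [apply: rVofK | apply: vecofK].
- exact: (rVof_op_table mulB eB e_tm).
- exact: (rVof_op_table brB eB e_tb).
Qed.

Section PoissonFiliform.
Variables (K : fieldType) (V : vectType K) (mul br : V -> V -> V).
Hypotheses (mul_bilinear : bilinear_op mul) (br_bilinear : bilinear_op br).
Hypothesis mulC : forall x y, mul x y = mul y x.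
Hypothesis mulA : forall x y z, mul (mul x y) z = mul x (mul y z).
Hypothesis br_alt : forall x, br x x = 0.
Hypothesis br_leibniz : forall x y z, br (mul x y) z = mul (br x z) y + mul x (br y z).

Implicit Types (u v w x y z p : V).

Local Notation mul0l := (op0l mul_bilinear).
Local Notation mulDl := (opDl mul_bilinear).
Local Notation mulDr := (opDr mul_bilinear).
Local Notation mulZl := (opZl mul_bilinear).
Local Notation mulZr := (opZr mul_bilinear).
Local Notation mulBr := (opBr mul_bilinear).
Local Notation prod_space_mul := (prod_space_mem mul_bilinear).
Local Notation brDr := (opDr br_bilinear).
Local Notation brZl := (opZl br_bilinear).
Local Notation brZr := (opZr br_bilinear).
Local Notation br_anti := (op_anti br_bilinear br_alt).
(* [L k] is the paper's P^(k+1). *)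
Local Notation L := (lower_pow mul).

Lemma lower_pow_decr k : (L k.+1 <= L k)%VS.
Proof.
elim: k => [|k IH]; first exact: subvf.
apply: prod_space_sub => u w uL _.
exact: prod_space_mul (subvP IH _ uL) (memvf w).
Qed.

Lemma lower_pow_antitone i j : (i <= j)%N -> (L j <= L i)%VS.
Proof.
move/subnK <-; elim: (j - i)%N => [|d IH]; first exact: subvv.
exact: subv_trans (lower_pow_decr _) IH.
Qed.

Lemma mul_lower_pow i j u w : u \in L i -> w \in L j -> mul u w \in L (i + j).+1.
Proof.
elim: j u w i => [|j IH] u w i uL wL.
  by rewrite addn0; apply: prod_space_mul; rewrite ?memvf.
move: w wL; apply: prod_space_ind => [|v v' Lv Lv'|c v Lv|p z pL _].
- by rewrite mulC mul0l mem0v.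
- by rewrite mulDr memvD.
- by rewrite mulZr memvZ.
- rewrite -mulA addnS; apply: prod_space_mul; last exact: memvf.
  exact: IH.
Qed.
Arguments mul_lower_pow i j {u w}.

(* [xpow x k] is x^(k+1): P has no unit. *)
Definition xpow x k := iter k (mul x) x.

Lemma mul_xpow x i j : mul (xpow x i) (xpow x j) = xpow x (i + j).+1.
Proof. by elim: i => //= i IH; rewrite mulA IH. Qed.

Lemma xpow_lower_pow x k : xpow x k \in L k.
Proof.
elim: k => [|k IH]; first exact: memvf.
exact: (mul_lower_pow 0 k (memvf x) IH).
Qed.

Lemma xpowZ (l : K) x k : xpow (l *: x) k = l ^+ k.+1 *: xpow x k.
Proof. by elim: k => [|k IH] /=; rewrite ?expr1 // IH mulZl mulZr scalerA -exprS. Qed.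

Lemma mul_xpow_ann x y k : mul x y = 0 -> mul (xpow x k) y = 0.
Proof. by move=> xy; elim: k => //= k IH; rewrite mulA IH mulC mul0l. Qed.

Lemma br_xpowS x k z : br (xpow x k.+1) z = mul (xpow x k) (br x z) *+ k.+2.
Proof.
elim: k => [|k IH] /=; first by rewrite br_leibniz mulC mulr2n.
rewrite br_leibniz IH -scaler_nat mulZr scaler_nat [mul (br x z) _]mulC -mulA.
by rewrite [RHS]mulrSr addrC.
Qed.

Lemma br_xpow x i j : br (xpow x i) (xpow x j) = 0.
Proof.
have br_x k : br x (xpow x k) = 0.
  case: k => [|k]; first exact: br_alt.
  by rewrite br_anti br_xpowS br_alt mulC mul0l mul0rn oppr0.
by case: i => [|i]; rewrite ?br_xpowS br_x ?(op0r mul_bilinear) ?mul0rn.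
Qed.

Lemma mul_br_ann x y : mul x y = 0 -> mul x (br x y) = 0 /\ mul y (br x y) = 0.
Proof.
move=> xy; split.
  apply/eqP; rewrite -oppr_eq0 -(opNr mul_bilinear) -br_anti.
  by have := br_leibniz x y x; rewrite xy (op0l br_bilinear) br_alt mul0l add0r => <-.
have := br_leibniz x y y; rewrite xy (op0l br_bilinear) br_alt (op0r mul_bilinear).
by rewrite addr0 mulC => <-.
Qed.

Section Filiform.
Local Notation n := (\dim {:V}).
Hypothesis filiform_mul : filiform mul.
Hypothesis n_gt3 : (3 < n)%N.

Lemma dim_lower_pow k : (0 < k < n)%N -> \dim (L k) = (n - k.+1)%N.
Proof. by move=> k_n; apply: (filiform_mul (i := k.+1)); lia. Qed.

Lemma lower_pow_eq0 k : (n.-1 <= k)%N -> L k = 0%VS.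
Proof.
move=> k_ge; apply/eqP; rewrite -subv0 (subv_trans (lower_pow_antitone k_ge)) //.
by rewrite subv0 -dimv_eq0 dim_lower_pow; lia.
Qed.

Lemma xpow_eq0 x k : (n.-1 <= k)%N -> xpow x k = 0.
Proof.
by move=> k_ge; apply/eqP; rewrite -memv0 -(lower_pow_eq0 k_ge) xpow_lower_pow.
Qed.

Lemma exists_mul_generator_lower_pow3 s : s \in L 1 -> s \notin L 2 ->
  exists2 a, a \notin L 1 & mul a s \in L 3.
Proof.
(* u |-> u s is a linear map from the plane P/P^2 to the line P^3/P^4, so it
   kills some a outside P^2. *)
move=> sL1 sL2.
have [t tL2 tL3] : exists2 t, t \in L 2 & t \notin L 3.
  by apply: exists_notin_of_dim_lt; rewrite !dim_lower_pow; lia.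
have mod_t u : exists c, mul u s - c *: t \in L 3.
  apply/memv_add_lineP; rewrite (add_line_codim1 (lower_pow_decr 2) tL2 tL3).
    exact: (mul_lower_pow 0 1 (memvf u) sL1).
  by rewrite !dim_lower_pow; lia.
have [u _ uL1] : exists2 u, u \in fullv & u \notin L 1.
  by apply: exists_notin_of_dim_lt; rewrite dim_lower_pow; lia.
have [w _ wL1] : exists2 w, w \in fullv & w \notin (<[u]> + L 1)%VS.
  by apply: exists_notin_of_dim_lt; rewrite dim_add_line // dim_lower_pow; lia.
have [al us] := mod_t u; have [be ws] := mod_t w.
have [al0|al0] := eqVneq al 0; first by rewrite al0 scale0r subr0 in us; exists u.
exists (be *: u - al *: w).
  apply: contra wL1 => uwL1.
  have -> : w = al^-1 *: (be *: u - (be *: u - al *: w)).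
    by rewrite opprB addrC subrK scalerA mulVf // scale1r.
  apply/memvZ/memvB; last exact: subvP (addvSr _ _) _ uwL1.
  exact/(subvP (addvSl _ _))/memvZ/memv_line.
have -> : mul (be *: u - al *: w) s =
    be *: (mul u s - al *: t) - al *: (mul w s - be *: t).
  rewrite (opBl mul_bilinear) !mulZl !scalerBr !scalerA mulrC opprB addrA.
  by congr (_ + _); rewrite subrK.
by apply: memvB; apply: memvZ.
Qed.

Lemma mul_lower_pow2_of_generator a s : s \in L 1 -> s \notin L 2 ->
  mul a s \in L 3 -> forall z, mul a z \in L 2.
Proof.
(* Otherwise s = c^-1 a z modulo P^3; as a s lies in P^4, so does s P, and
   then P^3 = P^2 P lies in the smaller P^4. *)
move=> sL1 sL2 asL3 z; apply/negPn/negP => azL2.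
have mod_s v : v \in L 1 -> exists c, v - c *: s \in L 2.
  move=> vL1; apply/memv_add_lineP.
  rewrite (add_line_codim1 (lower_pow_decr 1) sL1 sL2) //.
  by rewrite !dim_lower_pow; lia.
have [c azs] := mod_s _ (mul_lower_pow 0 0 (memvf a) (memvf z)).
have c0 : c != 0 by apply: contraNneq azL2 => c0; rewrite c0 scale0r subr0 in azs.
have sL3 p : mul s p \in L 3.
  have [d zpd] := mod_s _ (mul_lower_pow 0 0 (memvf z) (memvf p)).
  have -> : s = c^-1 *: (mul a z - (mul a z - c *: s)).
    by rewrite opprB addrC subrK scalerA mulVf // scale1r.
  rewrite mulZl (opBl mul_bilinear) mulA; apply/memvZ/memvB; last first.
    exact: (mul_lower_pow 2 0 azs (memvf p)).
  rewrite -(subrK (d *: s) (mul z p)) mulDr mulZr.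
  by apply: memvD; [exact: (mul_lower_pow 0 2 (memvf a) zpd) | exact: memvZ].
have : (L 2 <= L 3)%VS.
  apply: prod_space_sub => m p mL1 _; have [d md] := mod_s m mL1.
  rewrite -(subrK (d *: s) m) mulDl mulZl.
  by apply: memvD; [exact: (mul_lower_pow 2 0 md (memvf p)) | exact: memvZ].
by move/dimvS; rewrite !dim_lower_pow; lia.
Qed.

Lemma exists_mul_lower_pow2 : exists2 a, a \notin L 1 & forall z, mul a z \in L 2.
Proof.
have [s sL1 sL2] : exists2 s, s \in L 1 & s \notin L 2.
  by apply: exists_notin_of_dim_lt; rewrite !dim_lower_pow; lia.
have [a aL1 asL3] := exists_mul_generator_lower_pow3 sL1 sL2.
by exists a => //; apply: mul_lower_pow2_of_generator asL3.
Qed.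

Definition fil_basis x y : n.-tuple V :=
  [tuple if i.+1 == n then y else xpow x i | i < n].

Lemma fil_basis_nth x y k : (k < n)%N ->
  (fil_basis x y)`_k = if k.+1 == n then y else xpow x k.
Proof. by move=> k_lt; rewrite (nth_mktuple _ _ (Ordinal k_lt)). Qed.

Lemma xpow_in_fil_basis x y k : (k <= n.-2)%N -> xpow x k \in <<fil_basis x y>>%VS.
Proof.
move=> k_le; have k_lt : (k < n)%N by lia.
by apply/memv_span/tnthP; exists (Ordinal k_lt); rewrite tnth_mktuple ifN //=; lia.
Qed.

Lemma y_in_fil_basis x y : y \in <<fil_basis x y>>%VS.
Proof.
have n_lt : (n.-1 < n)%N by lia.
by apply/memv_span/tnthP; exists (Ordinal n_lt); rewrite tnth_mktuple ifT //=; lia.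
Qed.

Lemma vecof_fil_basis_xpow x y k : (0 < k < n)%N ->
  vecof (fil_basis x y) (ebas K n k) = xpow x k.-1.
Proof. by move=> k_n; rewrite vecof_ebas ?fil_basis_nth ?ifN //; lia. Qed.

Lemma vecof_fil_basis_y x y : vecof (fil_basis x y) (ebas K n n) = y.
Proof. by rewrite vecof_ebas ?fil_basis_nth ?ifT //; lia. Qed.

Definition fil_frame x y b be e :=
  [/\ mul x y = 0, mul y y = b *: xpow x n.-2,
      br x y = be *: y + e *: xpow x n.-2 & basis_of fullv (fil_basis x y)].

Section Generators.
Variables a x : V.
Hypotheses (a_notin : a \notin L 1) (aP : forall z, mul a z \in L 2).
Hypothesis x_notin : x \notin (<[a]> + L 1)%VS.

Lemma fullv_decomp p : exists al be r, r \in L 1 /\ p = al *: a + be *: x + r.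
Proof.
have full : (<[x]> + (<[a]> + L 1))%VS = fullv.
  apply: add_line_codim1 (subvf _) (memvf x) x_notin _.
  by rewrite !dim_add_line // dim_lower_pow; lia.
have /memv_add_lineP[be /memv_add_lineP[al pr]] : p \in (<[x]> + (<[a]> + L 1))%VS.
  by rewrite full memvf.
exists al, be, (p - be *: x - al *: a); split => //.
by rewrite addrAC [al *: a + _]addrC !subrK.
Qed.

Lemma fullv_decomp_lift y p : y - a \in L 1 ->
  exists al be r, r \in L 1 /\ p = al *: y + be *: x + r.
Proof.
move=> ya; have [al [be [r [rL1 ->]]]] := fullv_decomp p.
exists al, be, (r + al *: a - al *: y); split.
  by rewrite -addrA -scalerBr -opprB scalerN memvB // memvZ.
by rewrite addrC [RHS]addrC -[in RHS]addrA addKr addrA.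
Qed.

Lemma mul_a_xpow k : mul a (xpow x k) \in L k.+2.
Proof.
elim: k => [|k IH]; first exact: aP.
by rewrite /= -mulA (mulC a) mulA; exact: (mul_lower_pow 0 k.+2 (memvf x) IH).
Qed.

Lemma mul_xpow_mod k p : mul (xpow x k) p \in (<[xpow x k.+1]> + L k.+2)%VS.
Proof.
have [al [be [r [rL1 ->]]]] := fullv_decomp p.
rewrite !mulDr !mulZr; apply: memvD; first apply: memvD.
- by apply/memvZ/(subvP (addvSr _ _)); rewrite mulC mul_a_xpow.
- by apply/memvZ/(subvP (addvSl _ _)); rewrite mulC memv_line.
- apply: (subvP (addvSr _ _)).
  by have := mul_lower_pow k 1 (xpow_lower_pow x k) rL1; rewrite addn1.
Qed.

Lemma lower_pow_sub_line k : (0 < k)%N -> (L k <= <[xpow x k]> + L k.+1)%VS.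
Proof.
case: k => // k _; elim: k => [|k IH].
  apply: prod_space_sub => m p _ _.
  have [al [be [r [rL1 ->]]]] := fullv_decomp m.
  rewrite !mulDl !mulZl; apply: memvD; first apply: memvD.
  - exact/memvZ/(subvP (addvSr _ _))/aP.
  - exact/memvZ/(mul_xpow_mod 0 p).
  - exact/(subvP (addvSr _ _))/(mul_lower_pow 1 0 rL1 (memvf p)).
apply: prod_space_sub => m p mL _.
have /memv_add_lineP[c mc] := subvP IH m mL.
rewrite -(subrK (c *: xpow x k.+1) m) mulDl mulZl; apply: memvD.
  apply: (subvP (addvSr _ _)).
  by have := mul_lower_pow k.+2 0 mc (memvf p); rewrite addn0.
exact/memvZ/mul_xpow_mod.
Qed.

Lemma xpow_notin k : (k <= n.-2)%N -> xpow x k \notin L k.+1.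
Proof.
case: k => [_|k k_le]; first by apply: contra x_notin; apply: (subvP (addvSr _ _)).
apply/negP => xL.
have : (L k.+1 <= L k.+2)%VS.
  by apply: subv_trans (lower_pow_sub_line _) _; rewrite // subv_add subvv andbT -memvE.
by move/dimvS; rewrite !dim_lower_pow; lia.
Qed.

Lemma exists_ann_lift : exists2 y, y - a \in L 1 & mul x y = 0.
Proof.
suff lift j : exists2 y, y - a \in L 1 & mul x y \in L j.+2.
  have [y ya xy] := lift (n - 3)%N; exists y => //.
  by apply/eqP; rewrite -memv0 -(@lower_pow_eq0 (n - 3).+2) //; lia.
elim: j => [|j [y ya xy]]; first by exists a; rewrite ?subrr ?mem0v // mulC aP.
have /memv_add_lineP[c xyc] := subvP (lower_pow_sub_line (isT : 0 < j.+2)%N) _ xy.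
exists (y - c *: xpow x j.+1); last by rewrite mulBr mulZr.
rewrite addrAC; apply: memvB => //; apply: memvZ.
exact: subvP (lower_pow_antitone (isT : 1 <= j.+1)%N) _ (xpow_lower_pow x j.+1).
Qed.

Lemma ann_x_lower_pow1 z : z \in L 1 -> mul x z = 0 -> z \in <[xpow x n.-2]>%VS.
Proof.
move=> zL1 xz.
suff zL k : (0 < k <= n.-2)%N -> z \in L k.
  have /(subvP (lower_pow_sub_line _)) : z \in L n.-2 by apply: zL; lia.
  by rewrite lower_pow_eq0 ?addv0 //; lia.
elim: k => [//|[|k] IH k_le]; first exact: zL1.
have /memv_add_lineP[c zc] : z \in (<[xpow x k.+1]> + L k.+2)%VS.
  by apply: (subvP (lower_pow_sub_line _)) => //; apply: IH; lia.
have [c0|c0] := eqVneq c 0; first by rewrite c0 scale0r subr0 in zc.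
suff : xpow x k.+2 \in L k.+3 by rewrite (negbTE (xpow_notin _)) //; lia.
rewrite -[xpow x k.+2](scalerK c0); apply: memvZ.
have -> : c *: xpow x k.+2 = - mul x (z - c *: xpow x k.+1).
  by rewrite mulBr xz sub0r opprK mulZr.
by rewrite memvN; exact: (mul_lower_pow 0 k.+2 (memvf x) zc).
Qed.

Lemma fil_basis_full y : y - a \in L 1 -> basis_of fullv (fil_basis x y).
Proof.
move=> ya; rewrite basisEdim size_tuple leqnn andbT.
set S := <<fil_basis x y>>%VS.
have LS d k : (0 < k)%N -> (n.-1 - k <= d)%N -> (L k <= S)%VS.
  elim: d k => [|d IH] k k_pos k_d; have [k_ge|k_lt] := leqP n.-1 k.
  - by rewrite lower_pow_eq0 ?sub0v.
  - lia.
  - by rewrite lower_pow_eq0 ?sub0v.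
  apply: subv_trans (lower_pow_sub_line k_pos) _.
  by rewrite subv_add -memvE xpow_in_fil_basis ?IH //; lia.
have L1S : (L 1 <= S)%VS by apply: (LS n); lia.
apply/subvP => p _; have [al [be [r [rL1 ->]]]] := fullv_decomp_lift p ya.
apply: memvD; last exact: subvP L1S _ rL1.
apply: memvD; apply: memvZ; first exact: y_in_fil_basis.
by apply: (xpow_in_fil_basis _ _ (k := 0)); lia.
Qed.

Lemma br_ann_lift y : y - a \in L 1 -> mul x y = 0 ->
  exists be e, br x y = be *: y + e *: xpow x n.-2.
Proof.
move=> ya xy; have [xb _] := mul_br_ann xy.
have [al [be [r [rL1 bxy]]]] := fullv_decomp_lift (br x y) ya.
have xr : be *: xpow x 1 = - mul x r.
  apply/eqP; rewrite -addr_eq0; apply/eqP.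
  by rewrite -xb bxy !mulDr !mulZr xy scaler0 add0r.
have be0 : be = 0.
  apply/eqP; apply: contraT => be0.
  suff: xpow x 1 \in L 2 by rewrite (negbTE (xpow_notin _)) //; lia.
  rewrite -[xpow x 1](scalerK be0) xr; apply/memvZ; rewrite memvN.
  exact: (mul_lower_pow 0 1 (memvf x) rL1).
have /vlineP[e re] : r \in <[xpow x n.-2]>%VS.
  apply: ann_x_lower_pow1 => //; apply/eqP.
  by rewrite -oppr_eq0 -xr be0 scale0r.
by exists al, e; rewrite bxy re be0 scale0r addr0.
Qed.

Lemma exists_frame : exists y b be e, fil_frame x y b be e /\ (b != 0 -> be = 0).
Proof.
have [y ya xy] := exists_ann_lift.
have /vlineP[b yy] : mul y y \in <[xpow x n.-2]>%VS.
  apply: ann_x_lower_pow1; first exact: (mul_lower_pow 0 0 (memvf y) (memvf y)).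
  by rewrite -mulA xy mul0l.
have [be [e bxy]] := br_ann_lift ya xy.
exists y, b, be, e; split; first by split => //; exact: fil_basis_full.
move=> b0; have [_ yb] := mul_br_ann xy.
have q0 : xpow x n.-2 != 0.
  by apply: contraNneq (xpow_notin (leqnn _)) => ->; apply: mem0v.
move: yb; rewrite bxy mulDr !mulZr yy mulC mul_xpow_ann // scaler0 addr0 scalerA.
by move/eqP; rewrite scaler_eq0 mulf_eq0 (negbTE b0) (negbTE q0) !orbF => /eqP.
Qed.

End Generators.

Lemma exists_filiform_frame :
  exists x y b be e, fil_frame x y b be e /\ (b != 0 -> be = 0).
Proof.
have [a a_notin aP] := exists_mul_lower_pow2.
have [x _ x_notin] : exists2 x, x \in fullv & x \notin (<[a]> + L 1)%VS.
  by apply: exists_notin_of_dim_lt; rewrite dim_add_line // dim_lower_pow; lia.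
by exists x; apply: exists_frame a_notin aP x_notin.
Qed.

Lemma fil_basis_rescale x y (l m nu : K) : l != 0 -> m != 0 ->
  basis_of fullv (fil_basis x y) ->
  basis_of fullv (fil_basis (l *: x) (m *: y + nu *: xpow x n.-2)).
Proof.
move=> l0 m0; rewrite !basisEdim !size_tuple leqnn !andbT => /subv_trans; apply.
set S := <<fil_basis (l *: x) _>>%VS.
apply/span_subvP => _ /tnthP[i ->]; rewrite tnth_mktuple.
have xS k : (k <= n.-2)%N -> xpow x k \in S.
  move=> k_le; rewrite -[xpow x k](scalerK (expf_neq0 k.+1 l0)) -xpowZ.
  by apply/memvZ; apply: xpow_in_fil_basis.
case: ifP => [_|/negbT i_n]; last by apply: xS; have := ltn_ord i; lia.
rewrite -[y](scalerK m0) -[m *: y](addrK (nu *: xpow x n.-2)).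
by apply/memvZ/memvB; [exact: y_in_fil_basis | apply/memvZ/xS].
Qed.

Lemma frame_rescale x y b be e (l m nu b' be' e' : K) : l != 0 -> m != 0 ->
  m ^+ 2 * b = l ^+ n.-1 * b' -> l * be = be' ->
  l * (m * e - be * nu) = l ^+ n.-1 * e' ->
  fil_frame x y b be e -> fil_frame (l *: x) (m *: y + nu *: xpow x n.-2) b' be' e'.
Proof.
move=> l0 m0 Eb Ebe Ee [xy yy bxy xyB]; set q := xpow x n.-2.
have Xq : xpow (l *: x) n.-2 = l ^+ n.-1 *: q by rewrite xpowZ prednK //; lia.
have xq : mul x q = 0 by apply: (xpow_eq0 x (k := n.-2.+1)); lia.
have qq : mul q q = 0 by rewrite mul_xpow xpow_eq0 //; lia.
have qy : mul q y = 0 := mul_xpow_ann _ xy.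
split; last exact: fil_basis_rescale.
- by rewrite mulZl mulDr !mulZr xy xq !(scaler0, addr0).
- rewrite Xq scalerA [b' * _]mulrC -Eb !mulDl !mulDr !mulZl !mulZr yy (mulC y) qy qq.
  by rewrite !scaler0 !addr0 !scalerA expr2.
- rewrite Xq brZl brDr !brZr bxy (br_xpow x 0 n.-2) scaler0 addr0.
  rewrite !scalerDr !scalerA -addrA -scalerDl -Ebe [e' * _]mulrC -Ee.
  by congr (_ *: _ + _ *: _); ring.
Qed.

Lemma frame_mul_table x y (c : bool) be e : fil_frame x y c%:R be e ->
  forall i j : 'I_n, mul (fil_basis x y)`_i (fil_basis x y)`_j =
    vecof (fil_basis x y) (fil_mul_tab K n c i.+1 j.+1).
Proof.
case=> xy yy _ _ i j.
rewrite /fil_mul_tab !fil_basis_nth ?ltn_ord //.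
have [i_n|i_n] := eqVneq i.+1 n; have [j_n|j_n] := eqVneq j.+1 n;
  rewrite ?andbF ?addr0; last case: (leqP (i.+1 + j.+1) n.-1) => ij.
- rewrite ifF ?add0r; last lia.
  case: c yy => /= ->; rewrite ?scale1r ?scale0r ?linear0 // vecof_fil_basis_xpow //; lia.
- by rewrite mulC mul_xpow_ann // ifF ?linear0 //; lia.
- by rewrite mul_xpow_ann // ifF ?linear0 //; lia.
- by rewrite mul_xpow vecof_fil_basis_xpow ?addSn ?addnS //; lia.
- by rewrite linear0 mul_xpow xpow_eq0 //; lia.
Qed.

Lemma frame_br_table x y b be e : fil_frame x y b be e ->
  forall i j : 'I_n, br (fil_basis x y)`_i (fil_basis x y)`_j =
    vecof (fil_basis x y) (fil_br_tab (be *: ebas K n n + e *: ebas K n n.-1) i.+1 j.+1).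
Proof.
case=> xy _ bxy _ i j.
have Xbv : vecof (fil_basis x y) (be *: ebas K n n + e *: ebas K n n.-1) = br x y.
  by rewrite linearD !linearZ /= vecof_fil_basis_y vecof_fil_basis_xpow ?bxy //; lia.
have ann k : mul (xpow x k) (br x y) = 0.
  rewrite bxy mulDr !mulZr mul_xpow_ann // mul_xpow xpow_eq0 ?scaler0 ?addr0 //; lia.
have n1 : (n == 1)%N = false by apply/eqP; lia.
rewrite /fil_br_tab !fil_basis_nth ?ltn_ord //.
have [i_n|i_n] := eqVneq i.+1 n; have [j_n|j_n] := eqVneq j.+1 n;
  rewrite ?i_n ?j_n ?n1 ?eqxx ?andbF ?andbT /=.
- by rewrite br_alt linear0.
- case: j j_n => [[|j] j_lt] _ /=; first by rewrite br_anti linearN /= Xbv.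
  by rewrite br_anti br_xpowS ann mul0rn oppr0 linear0.
- case: i i_n => [[|i] i_lt] _ /=; first by rewrite Xbv.
  by rewrite br_xpowS ann mul0rn linear0.
- by rewrite br_xpow linear0.
Qed.

Lemma frame_iso x y (c : bool) be e : fil_frame x y c%:R be e ->
  poisson_iso mul br (@model_mul K n c)
    (model_br (be *: ebas K n n + e *: ebas K n n.-1)).
Proof.
move=> fr; have [_ _ _ xyB] := fr.
exact: poisson_iso_of_basis mul_bilinear br_bilinear xyB
  (frame_mul_table fr) (frame_br_table fr).
Qed.

Lemma filiform_poisson_classification :
  (forall k (c : K), (0 < k)%N -> exists r : K, r ^+ k = c) ->
  [\/ poisson_iso mul br (@model_mul K n false) (model_br (0 : 'rV[K]_n)) \/
      poisson_iso mul br (@model_mul K n false) (model_br (ebas K n n)),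
      poisson_iso mul br (@model_mul K n false) (model_br (ebas K n n.-1)),
      poisson_iso mul br (@model_mul K n true) (model_br (0 : 'rV[K]_n))
    | poisson_iso mul br (@model_mul K n true) (model_br (ebas K n n.-1))].
Proof.
move=> root; have [x [y [b [be [e [fr b_be]]]]]] := exists_filiform_frame.
have iso (c : bool) (l m nu be' e' : K) : l != 0 -> m != 0 ->
    m ^+ 2 * b = l ^+ n.-1 * c%:R -> l * be = be' ->
    l * (m * e - be * nu) = l ^+ n.-1 * e' ->
    poisson_iso mul br (@model_mul K n c)
      (model_br (be' *: ebas K n n + e' *: ebas K n n.-1)).
  by move=> l0 m0 Eb Ebe Ee; exact/frame_iso/(frame_rescale l0 m0 Eb Ebe Ee fr).
have [b0|b0] := eqVneq b 0.
  have [be0|be0] := eqVneq be 0.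
    have [e0|e0] := eqVneq e 0.
      apply: Or41; left; have := iso false 1 1 0 0 0; rewrite !scale0r addr0.
      by apply; rewrite /= ?oner_eq0 ?b0 ?be0 ?e0 //; ring.
    apply: Or42; have := iso false 1 e^-1 0 0 1; rewrite scale0r add0r scale1r.
    by apply; rewrite /= ?oner_eq0 ?invr_eq0 ?b0 ?be0 ?expr1n ?mulr0 //; field.
  apply: Or41; right; have := iso false be^-1 1 (e / be) 1 0.
  rewrite scale0r addr0 scale1r.
  by apply; rewrite /= ?oner_eq0 ?invr_eq0 ?b0 ?expr1n ?mulr0 //; field.
have be0 := b_be b0.
have [w wb] := root 2%N b isT.
have w0 : w != 0 by apply: contraNneq b0 => w0; rewrite -wb w0 expr0n.
have [e0|e0] := eqVneq e 0.
  apply: Or43; have := iso true 1 w^-1 0 0 0; rewrite !scale0r addr0.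
  by apply; rewrite /= ?oner_eq0 ?invr_eq0 ?be0 ?e0 -?wb ?expr1n ?mulr0 //; field.
(* With t^(n-3) = e^2 / b, rescaling x by t and y by t^(n-2) / e normalises
   both b and e to 1. *)
have [t tE] : exists t, t ^+ (n - 3) = e ^+ 2 / b by apply: root; lia.
have t0 : t != 0.
  have : t ^+ (n - 3) != 0 by rewrite tE mulf_neq0 ?invr_eq0 ?expf_neq0.
  by apply: contraNneq => ->; rewrite expr0n subn_eq0 leqNgt n_gt3.
have tn1 : t ^+ n.-1 = t ^+ (n - 3) * t * t by rewrite -!exprSr; congr (_ ^+ _); lia.
have tn2 : t ^+ n.-2 = t ^+ (n - 3) * t by rewrite -exprSr; congr (_ ^+ _); lia.
apply: Or44; have := iso true t (t ^+ n.-2 / e) 0 0 1; rewrite scale0r add0r scale1r.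
by apply; rewrite /= ?mulf_neq0 ?expf_neq0 ?invr_eq0 ?be0 ?tn1 ?tn2 ?tE //;
  field; rewrite ?b0 ?e0.
Qed.

End Filiform.
End PoissonFiliform.

Theorem theorem3p9 (R : realType) (n : nat) (V : vectType R[i])
  (mul br : V -> V -> V) :
  (3 < n)%N ->
  \dim (fullv : {vspace V}) = n ->
  poisson_algebra mul br ->
  filiform mul ->
  [\/ poisson_iso mul br (@model_mul R[i] n false) (model_br (0 : 'rV[R[i]]_n)) \/
      poisson_iso mul br (@model_mul R[i] n false) (model_br (@ebas R[i] n n)),
      poisson_iso mul br (@model_mul R[i] n false) (model_br (@ebas R[i] n n.-1)),
      poisson_iso mul br (@model_mul R[i] n true) (model_br (0 : 'rV[R[i]]_n))
    | poisson_iso mul br (@model_mul R[i] n true) (model_br (@ebas R[i] n n.-1))].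
Proof.
move=> n_gt3 dimV [[mulB brB] [mulC mulA] br_alt _ br_leibniz] fil; subst n.
apply: filiform_poisson_classification => // k z k_gt0.
by exists (k.-root z); rewrite rootCK.
Qed.
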